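(* Let $b(v,s)$ be the Dutch-phase equilibrium bidding function. It is the solution of $$\frac{\partial b(v,s)}{\partial v}=\frac{g(v)}{G(v)}\,\frac{c(s-b(v,s))v-b(v,s)}{1+c'(s-b(v,s))v},\qquad b(0,s)=0,$$ assumed increasing in $v$ and sufficiently smooth that mixed partial derivatives commute. Then $\frac{\partial b(v,s)}{\partial s}<1$ for all relevant $v$ and $s$.
   Context: Values are i.i.d. on $[0,1]$ with twice differentiable CDF $F$ and density $f$; $n\ge2$ bidders. Write $G=F^{n-1}$ and $g=G'$. Time cost: $c:[0,1]\to\mathbb{R}_+$ differentiable with $c(0)=1$ and $c'>-1$, and either $c\equiv1$ or $c'<0$ everywhere. It is also assumed twice differentiable, as the argument uses $c''$. $s\in[0,1]$ is the starting price of an Istanbul Flower Auction. A winner with value $v$ paying $p$ after duration $t$ gets $c(t)v-p$, and the Dutch phase descends from $s$, so its duration is $s-b$. *)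

From Stdlib Require Import Reals.
From Coquelicot Require Import Coquelicot.
Open Scope R_scope.

(* G = F^(n-1), the CDF of the highest of the other n-1 values. *)
Definition Gof (F : R -> R) (n : nat) (v : R) : R := (F v) ^ (n - 1).
Definition gof (F : R -> R) (n : nat) (v : R) : R := Derive (Gof F n) v.

Definition dutch_rhs (F c : R -> R) (n : nat) (v s x : R) : R :=
  gof F n v / Gof F n v * (c (s - x) * v - x) / (1 + Derive c (s - x) * v).

From Stdlib Require Import Reals Lra.
From Coquelicot Require Import Coquelicot.
Open Scope R_scope.

(* Fix [s] and write [h(w) = d b(w,s) / ds], [D(w) = 1 + c'(s - b(w,s)) w] for the
   denominator of the ODE.  Differentiating the ODE in [s] (mixed partials commute) gives a
   linear ODE in [w] for [u = 1 - h], and with the integrating factor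
   [E = exp (- int c'(s - b)/D)] the quantity [P = u G D E] satisfies [P' = g E >= 0].
   Since [b(0, .) = 0] we have [h(0) = 0], so [u > 0] and [P > 0] just to the right of [0]
   (there [G > 0], as the ODE forbids [F] to vanish where the bid strictly increases).
   Hence [P > 0] up to [v], and [u(v) > 0]. *)

Lemma ex_derive_cont_delta (f : R -> R) x eps : ex_derive f x -> 0 < eps ->
  exists d, 0 < d /\ forall y, Rabs (y - x) < d -> Rabs (f y - f x) < eps.
Proof.
  intros Hd He.
  apply ex_derive_continuous, continuity_pt_filterlim in Hd.
  destruct (Hd eps He) as [d [Hd0 Hnear]].
  exists d. split; auto.
  intros y Hy. destruct (Req_dec y x) as [-> | Hne].
  - rewrite Rminus_eq_0, Rabs_R0. exact He.
  - apply Hnear. split; [split; [exact I | auto] | exact Hy].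
Qed.

Lemma is_derive_ge0_of_left_max (f : R -> R) x l d :
  is_derive f x l -> 0 < d -> (forall y, x - d < y <= x -> f y <= f x) -> 0 <= l.
Proof.
  intros Hf Hd Hmax. apply is_derive_Reals in Hf.
  destruct (Rle_lt_dec 0 l) as [|Hl]; auto. exfalso.
  destruct (Hf (- l / 2) ltac:(lra)) as [d1 Hd1].
  set (h := - Rmin d d1 / 2).
  assert (Hm := Rmin_l d d1). assert (Hm1 := Rmin_r d d1).
  assert (Hpos : 0 < Rmin d d1) by (apply Rmin_pos; [lra | apply (cond_pos d1)]).
  specialize (Hd1 h ltac:(unfold h; apply Rlt_not_eq; lra) ltac:(unfold h; rewrite Rabs_left; lra)).
  assert (Hq : 0 <= (f (x + h) - f x) / h).
  { assert (f (x + h) <= f x) by (apply Hmax; unfold h; lra).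
    replace ((f (x + h) - f x) / h) with ((f x - f (x + h)) / - h) by (field; unfold h; lra).
    apply Rdiv_le_0_compat; [lra | unfold h; lra]. }
  apply Rabs_lt_between in Hd1. lra.
Qed.

Lemma is_derive_unique_left (f g : R -> R) x l1 l2 d :
  is_derive f x l1 -> is_derive g x l2 -> 0 < d ->
  (forall y, x - d < y <= x -> f y = g y) -> l1 = l2.
Proof.
  intros Hf Hg Hd Hfg.
  assert (Hfg' : 0 <= l1 - l2).
  { apply (is_derive_ge0_of_left_max (fun t => f t - g t) x _ d); auto.
    - exact (is_derive_minus f g x l1 l2 Hf Hg).
    - intros y Hy. rewrite !Hfg by lra. lra. }
  assert (Hgf' : 0 <= l2 - l1).
  { apply (is_derive_ge0_of_left_max (fun t => g t - f t) x _ d); auto.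
    - exact (is_derive_minus g f x l2 l1 Hg Hf).
    - intros y Hy. rewrite !Hfg by lra. lra. }
  lra.
Qed.

Lemma is_derive_const_on (f : R -> R) a b x l : a < b -> a <= x <= b ->
  (forall y, a <= y <= b -> f y = f a) -> is_derive f x l -> l = 0.
Proof.
  intros Hab Hx Hconst Hf.
  destruct (Rlt_or_le a x) as [Hax | Hxa].
  - apply (is_derive_unique_left f (fun _ => f a) x l 0 (x - a) Hf); try lra.
    + exact (is_derive_const (f a) x).
    + intros y Hy. apply Hconst. lra.
  - (* at the left end point, reflect [t |-> -t] to reduce to the left-sided case *)
    assert (Hr : is_derive (fun t => f (- t)) (- x) (- l)).
    { replace (- l) with (scal (-1) l) by (unfold scal; simpl; unfold mult; simpl; ring).
      apply (is_derive_comp f Ropp). rewrite Ropp_involutive. exact Hf.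
      exact (is_derive_opp (fun t : R => t) (- x) 1 (is_derive_id (- x))). }
    cut (- l = 0); [lra|].
    apply (is_derive_unique_left _ (fun _ => f a) (- x) _ 0 (b - a) Hr); try lra.
    + exact (is_derive_const (f a) (- x)).
    + intros y Hy. apply Hconst. lra.
Qed.

Lemma Rle_of_Derive_nonneg (f : R -> R) a b : a < b ->
  (forall x, a <= x <= b -> ex_derive f x) ->
  (forall x, a < x < b -> 0 <= Derive f x) -> f a <= f b.
Proof.
  intros Hab Hd Hpos.
  destruct (MVT_cor2 f (Derive f) a b Hab) as [x [Hfx Hx]].
  - intros x Hx. apply is_derive_Reals, Derive_correct, Hd. exact Hx.
  - specialize (Hpos x Hx). nra.
Qed.

Lemma exists_integrating_factor (k : R -> R) a b : a <= b ->
  (forall x, a <= x <= b -> continuous k x) ->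
  exists E, (forall x, 0 < E x) /\
    forall x, a <= x <= b -> is_derive E x (- k x * E x).
Proof.
  intros Hab Hk.
  (* Extending [k] constantly outside [a, b] makes it continuous everywhere. *)
  set (clamp := fun x => Rmax a (Rmin x b)).
  set (kc := fun x => k (clamp x)).
  assert (Hclamp_in : forall x, a <= clamp x <= b).
  { intros x. unfold clamp. split; [apply Rmax_l | apply Rmax_lub; [lra | apply Rmin_r]]. }
  assert (Hkc : forall x, continuous kc x).
  { intros x. apply (continuous_comp clamp k); [|apply Hk, Hclamp_in].
    apply continuity_pt_filterlim. intros eps Heps. exists eps. split; auto.
    intros y [_ Hy]. change (Rabs (y - x) < eps) in Hy.
    change (Rabs (clamp y - clamp x) < eps). unfold clamp.
    unfold Rmax, Rmin; repeat destruct Rle_dec; unfold Rabs in *;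
      repeat destruct Rcase_abs; lra. }
  exists (fun x => exp (- RInt kc a x)). split; [intros; apply exp_pos|].
  intros x Hx.
  replace (- k x * exp (- RInt kc a x)) with (scal (- kc x) (exp (- RInt kc a x))).
  2: { unfold kc, clamp. rewrite Rmin_left, Rmax_right by lra. reflexivity. }
  apply (is_derive_comp exp (fun y => - RInt kc a y)); [apply is_derive_exp|].
  apply (is_derive_opp (fun y => RInt kc a y)).
  apply (is_derive_RInt kc (fun y => RInt kc a y) a); [|apply Hkc].
  apply filter_forall. intros y.
  apply (RInt_correct (V := R_CompleteNormedModule)), ex_RInt_continuous. auto.
Qed.

Lemma is_derive_dutch_rhs (F c beta : R -> R) n v s :
  ex_derive beta s -> ex_derive c (s - beta s) -> ex_derive (Derive c) (s - beta s) ->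
  1 + Derive c (s - beta s) * v <> 0 ->
  is_derive (fun t => dutch_rhs F c n v t (beta t)) s
    (gof F n v / Gof F n v *
     ((Derive c (s - beta s) * (1 - Derive beta s) * v - Derive beta s)
        * (1 + Derive c (s - beta s) * v)
      - (c (s - beta s) * v - beta s) * (Derive (Derive c) (s - beta s) * (1 - Derive beta s) * v))
     / (1 + Derive c (s - beta s) * v) ^ 2).
Proof.
  intros Hbeta Hc Hc' Hden. unfold dutch_rhs. unfold Rminus in *.
  auto_derive; [repeat split; auto|].
  change (fun t => c t) with c. change (fun t => Derive c t) with (Derive c).
  change (fun t => beta t) with beta. set (A := gof F n v / Gof F n v).
  field. exact Hden.
Qed.

Section Dutch_phase.

Variables (n : nat) (F c : R -> R) (b : R -> R -> R).

Hypothesis HF0 : F 0 = 0.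
Hypothesis HFmono : forall x y, 0 <= x -> x <= y -> y <= 1 -> F x <= F y.
Hypothesis HFd : forall x, 0 <= x <= 1 -> ex_derive F x /\ ex_derive (Derive F) x.
Hypothesis Hcd : forall t, 0 <= t <= 1 -> ex_derive c t /\ ex_derive (Derive c) t.
Hypothesis Hc' : forall t, 0 <= t <= 1 -> -1 < Derive c t.
Hypothesis Hsmooth : forall v s, 0 <= v <= 1 -> 0 <= s <= 1 ->
  ex_derive (fun w => b w s) v /\
  ex_derive (fun t => b v t) s /\
  ex_derive (fun t => Derive (fun w => b w t) v) s /\
  ex_derive (fun w => Derive (fun t => b w t) s) v /\
  Derive (fun t => Derive (fun w => b w t) v) s =
  Derive (fun w => Derive (fun t => b w t) s) v.
Hypothesis Hb0 : forall s, 0 <= s <= 1 -> b 0 s = 0.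
Hypothesis Hinc : forall s v w, 0 <= s <= 1 -> 0 <= v -> v < w -> w <= 1 -> b v s < b w s.
Hypothesis Hode : forall v s, 0 < v <= 1 -> 0 <= s <= 1 -> b v s <= s ->
  Derive (fun w => b w s) v = dutch_rhs F c n v s (b v s).

Definition slope (s w : R) : R := Derive (fun t => b w t) s.

Definition denom (s w : R) : R := 1 + Derive c (s - b w s) * w.

Definition potential (E : R -> R) (s w : R) : R :=
  (1 - slope s w) * Gof F n w * denom s w * E w.

Lemma slope_at_zero s : 0 <= s <= 1 -> slope s 0 = 0.
Proof.
  intros Hs. destruct (Hsmooth 0 s ltac:(lra) Hs) as [_ [Hd _]].
  apply (is_derive_const_on (fun t => b 0 t) 0 1 s); try lra.
  - intros y Hy. rewrite !Hb0; lra.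
  - exact (Derive_correct _ _ Hd).
Qed.

Lemma exists_small_slope s v : 0 <= s <= 1 -> 0 < v ->
  exists w, 0 < w < v /\ slope s w < 1.
Proof.
  intros Hs Hv.
  destruct (Hsmooth 0 s ltac:(lra) Hs) as [_ [_ [_ [Hd _]]]].
  destruct (ex_derive_cont_delta _ _ 1 Hd ltac:(lra)) as [d [Hd0 Hnear]].
  assert (Hm := Rmin_l d v). assert (Hm' := Rmin_r d v).
  assert (Hpos : 0 < Rmin d v) by (apply Rmin_pos; lra).
  exists (Rmin d v / 2). split; [lra|].
  specialize (Hnear (Rmin d v / 2) ltac:(rewrite Rminus_0_r, Rabs_right; lra)).
  change (Rabs (slope s (Rmin d v / 2) - slope s 0) < 1) in Hnear.
  rewrite slope_at_zero in Hnear by exact Hs.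
  apply Rabs_lt_between in Hnear. lra.
Qed.

Lemma bid_nonneg s w : 0 <= s <= 1 -> 0 <= w <= 1 -> 0 <= b w s.
Proof.
  intros Hs Hw. rewrite <- (Hb0 s Hs).
  destruct (Req_dec w 0) as [-> | Hw0]; [lra|].
  left. apply Hinc; lra.
Qed.

Lemma is_derive_Gof x : 0 <= x <= 1 -> is_derive (Gof F n) x (gof F n x).
Proof.
  intros Hx. apply Derive_correct. destruct (HFd x Hx) as [[l Hl] _].
  eexists. apply is_derive_pow. exact Hl.
Qed.

Lemma gof_nonneg x : 0 < x <= 1 -> 0 <= gof F n x.
Proof.
  intros Hx. apply (is_derive_ge0_of_left_max (Gof F n) x _ x); [apply is_derive_Gof; lra | lra |].
  intros y Hy. apply pow_incr. split; [rewrite <- HF0 | ]; apply HFmono; lra.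
Qed.

(* If [F] vanished on [[0, x]], so would [g], and the ODE would freeze the bid there. *)
Lemma F_pos s x : 0 <= s <= 1 -> 0 < x <= 1 -> b x s <= s -> 0 < F x.
Proof.
  intros Hs Hx Hbx.
  destruct (Rlt_or_le 0 (F x)) as [| HFx]; [assumption | exfalso].
  assert (HF0x : forall y, 0 <= y <= x -> F y = 0).
  { intros y Hy. assert (F 0 <= F y) by (apply HFmono; lra).
    assert (F y <= F x) by (apply HFmono; lra). lra. }
  assert (Hg0 : forall y, 0 < y < x -> gof F n y = 0).
  { intros y Hy. apply (is_derive_const_on (Gof F n) 0 x y); try lra.
    - intros z Hz. unfold Gof. rewrite !HF0x by lra. reflexivity.
    - apply is_derive_Gof. lra. }
  assert (Hfrozen : - b 0 s <= - b x s).
  { apply (Rle_of_Derive_nonneg (fun w => - b w s) 0 x); [lra | |].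
    - intros y Hy. apply (ex_derive_opp (fun w => b w s)), (Hsmooth y s); lra.
    - intros y Hy. rewrite Derive_opp, Hode; try lra.
      + unfold dutch_rhs. rewrite Hg0 by lra. unfold Rdiv. rewrite !Rmult_0_l. lra.
      + assert (b y s < b x s) by (apply Hinc; lra). lra. }
  assert (b 0 s < b x s) by (apply Hinc; lra). lra.
Qed.

Lemma Gof_pos s x : 0 <= s <= 1 -> 0 < x <= 1 -> b x s <= s -> 0 < Gof F n x.
Proof. intros Hs Hx Hbx. apply pow_lt. exact (F_pos s x Hs Hx Hbx). Qed.

Lemma denom_pos s w : 0 <= w <= 1 -> 0 <= s - b w s <= 1 -> 0 < denom s w.
Proof.
  intros Hw Hsb. unfold denom. assert (H := Hc' (s - b w s) Hsb).
  destruct (Req_dec w 0) as [-> | Hw0]; [lra|].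
  assert (0 < w * (1 + Derive c (s - b w s))) by (apply Rmult_lt_0_compat; lra). nra.
Qed.

Lemma Derive_slope s x : 0 < x <= 1 -> 0 < s <= 1 -> b x s < s ->
  Derive (slope s) x =
  gof F n x / Gof F n x *
  ((Derive c (s - b x s) * (1 - slope s x) * x - slope s x) * denom s x
   - (c (s - b x s) * x - b x s) * (Derive (Derive c) (s - b x s) * (1 - slope s x) * x))
  / denom s x ^ 2.
Proof.
  intros Hx Hs Hbx.
  destruct (Hsmooth x s ltac:(lra) ltac:(lra)) as [_ [Hbt [Hmixd [_ Hmix]]]].
  unfold slope at 1. rewrite <- Hmix.
  assert (Hsb : 0 <= s - b x s <= 1) by (assert (H := bid_nonneg s x ltac:(lra) ltac:(lra)); lra).
  (* The ODE holds at [(x, t)] for [t <= s] close to [s], since [b x s < s]. *)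
  destruct (ex_derive_cont_delta _ _ ((s - b x s) / 2) Hbt ltac:(lra)) as [d [Hd Hnear]].
  set (d' := Rmin d (Rmin ((s - b x s) / 2) s)).
  assert (Hd'1 := Rmin_l d (Rmin ((s - b x s) / 2) s)).
  assert (Hd'2 := Rmin_r d (Rmin ((s - b x s) / 2) s)).
  assert (Hd'3 := Rmin_l ((s - b x s) / 2) s). assert (Hd'4 := Rmin_r ((s - b x s) / 2) s).
  assert (Hd' : 0 < d') by (apply Rmin_pos; [lra | apply Rmin_pos; lra]).
  apply (is_derive_unique_left _ (fun t => dutch_rhs F c n x t (b x t)) s _ _ d'
           (Derive_correct _ _ Hmixd)); [| exact Hd' |].
  - apply is_derive_dutch_rhs; try apply Hcd; try lra; [exact Hbt |].
    apply Rgt_not_eq, denom_pos; lra.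
  - intros t Ht. apply Hode; try (unfold d' in *; lra).
    specialize (Hnear t ltac:(rewrite Rabs_left1; unfold d' in *; lra)).
    apply Rabs_lt_between in Hnear. unfold d' in *; lra.
Qed.

Lemma ex_derive_potential E s x : 0 <= x <= 1 -> 0 <= s <= 1 -> 0 <= s - b x s <= 1 ->
  ex_derive E x -> ex_derive (potential E s) x.
Proof.
  intros Hx Hs Hsb HE. unfold potential, denom, Rminus in *.
  auto_derive. repeat split; try apply Hcd; try apply (Hsmooth x s); auto.
  exists (gof F n x). apply is_derive_Gof. exact Hx.
Qed.

Lemma is_derive_potential E s x : 0 < x <= 1 -> 0 < s <= 1 -> b x s < s ->
  is_derive E x (- (Derive c (s - b x s) / denom s x) * E x) ->
  is_derive (potential E s) x (gof F n x * E x).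
Proof.
  intros Hx Hs Hbx HE.
  assert (Hsb : 0 <= s - b x s <= 1) by (assert (H := bid_nonneg s x ltac:(lra) ltac:(lra)); lra).
  assert (HG := Gof_pos s x ltac:(lra) Hx ltac:(lra)).
  assert (HD := denom_pos s x ltac:(lra) Hsb).
  assert (Hslope := Derive_slope s x Hx Hs Hbx).
  assert (Hbw := Hode x s Hx ltac:(lra) ltac:(lra)).
  unfold potential, denom, dutch_rhs, Rminus in *.
  auto_derive.
  - repeat split; try apply Hcd; try apply (Hsmooth x s); try lra; [|eexists; exact HE].
    exists (gof F n x). apply is_derive_Gof. lra.
  - change (fun w => slope s w) with (slope s).
    change (Derive (fun w => Gof F n w) x) with (gof F n x).
    change (fun t => Derive c t) with (Derive c).
    change (fun w => E w) with E.
    rewrite Hslope, Hbw, (is_derive_unique _ _ _ HE).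
    (* [P' = g E]: the [c''] terms of [h'] and [D'] cancel, and so do the [c'] terms of
       [D'] and [E']. *)
    field. split; apply Rgt_not_eq; assumption.
Qed.

Lemma slope_lt_one s v : 0 < v <= 1 -> 0 <= s <= 1 -> b v s <= s -> slope s v < 1.
Proof.
  intros Hv Hs Hbv.
  assert (Hbelow : forall x, 0 <= x < v -> b x s < s).
  { intros x Hx. assert (b x s < b v s) by (apply Hinc; lra). lra. }
  assert (Hrange : forall x, 0 <= x <= v -> 0 <= s - b x s <= 1).
  { intros x Hx. assert (H := bid_nonneg s x Hs ltac:(lra)).
    destruct (Req_dec x v) as [-> | Hxv]; [lra|]. assert (H' := Hbelow x ltac:(lra)). lra. }
  assert (Hs0 : 0 < s) by (assert (H := Hbelow 0 ltac:(lra)); rewrite Hb0 in H; lra).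
  destruct (exists_small_slope s v Hs ltac:(lra)) as [w1 [Hw1 Hslope1]].
  set (k := fun x => Derive c (s - b x s) / denom s x).
  destruct (exists_integrating_factor k w1 v) as [E [HEpos HE]]; [lra | |].
  { intros x Hx. apply (@ex_derive_continuous R_AbsRing R_NormedModule).
    assert (HD := denom_pos s x ltac:(lra) (Hrange x ltac:(lra))).
    assert (Hsb := Hrange x ltac:(lra)).
    unfold k, denom, Rminus in *. auto_derive.
    repeat split; try apply Hcd; try apply (Hsmooth x s); lra. }
  assert (Hmono : potential E s w1 <= potential E s v).
  { apply Rle_of_Derive_nonneg; [lra | |].
    - intros x Hx. apply ex_derive_potential; try lra; [apply Hrange; lra |].
      eexists. exact (HE x Hx).
    - intros x Hx. rewrite (is_derive_unique _ _ _ (is_derive_potential E s x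
        ltac:(lra) ltac:(lra) (Hbelow x ltac:(lra)) (HE x ltac:(lra)))).
      apply Rmult_le_pos; [apply gof_nonneg; lra | left; apply HEpos]. }
  assert (Hpos : forall x, 0 < x <= v -> 0 < Gof F n x * denom s x * E x).
  { intros x Hx. apply Rmult_lt_0_compat; [apply Rmult_lt_0_compat|apply HEpos].
    - apply (Gof_pos s x); try lra. assert (H := Hrange x ltac:(lra)). lra.
    - apply denom_pos; [lra | apply Hrange; lra]. }
  assert (Hfactor : forall x, potential E s x = (1 - slope s x) * (Gof F n x * denom s x * E x))
    by (intros; unfold potential; ring).
  rewrite !Hfactor in Hmono.
  assert (Hw1pos := Hpos w1 ltac:(lra)). assert (Hvpos := Hpos v ltac:(lra)).
  assert (0 < (1 - slope s w1) * (Gof F n w1 * denom s w1 * E w1))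
    by (apply Rmult_lt_0_compat; lra).
  destruct (Rlt_or_le (slope s v) 1) as [| Hge]; [assumption | nra].
Qed.

End Dutch_phase.

Theorem lemma2
  (n : nat) (F c : R -> R) (b : R -> R -> R)
  (Hn : (2 <= n)%nat)
  (HF0 : F 0 = 0) (HF1 : F 1 = 1)
  (HFmono : forall x y, 0 <= x -> x <= y -> y <= 1 -> F x <= F y)
  (HFd : forall x, 0 <= x <= 1 -> ex_derive F x /\ ex_derive (Derive F) x)
  (Hcnn : forall t, 0 <= t <= 1 -> 0 <= c t)
  (Hcd : forall t, 0 <= t <= 1 -> ex_derive c t /\ ex_derive (Derive c) t)
  (Hc0 : c 0 = 1)
  (Hc' : forall t, 0 <= t <= 1 -> -1 < Derive c t)
  (Hcase : (forall t, 0 <= t <= 1 -> c t = 1) \/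
           (forall t, 0 <= t <= 1 -> Derive c t < 0))
  (Hsmooth : forall v s, 0 <= v <= 1 -> 0 <= s <= 1 ->
     ex_derive (fun w => b w s) v /\
     ex_derive (fun t => b v t) s /\
     ex_derive (fun t => Derive (fun w => b w t) v) s /\
     ex_derive (fun w => Derive (fun t => b w t) s) v /\
     Derive (fun t => Derive (fun w => b w t) v) s =
     Derive (fun w => Derive (fun t => b w t) s) v)
  (Hb0 : forall s, 0 <= s <= 1 -> b 0 s = 0)
  (Hinc : forall s v w, 0 <= s <= 1 -> 0 <= v -> v < w -> w <= 1 ->
     b v s < b w s)
  (Hode : forall v s, 0 < v <= 1 -> 0 <= s <= 1 -> b v s <= s ->
     Derive (fun w => b w s) v = dutch_rhs F c n v s (b v s)) :
  forall v s, 0 <= v <= 1 -> 0 <= s <= 1 -> b v s <= s ->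
    Derive (fun t => b v t) s < 1.
Proof.
  intros v s Hv Hs Hbs. change (slope b s v < 1).
  destruct (Req_dec v 0) as [-> | Hv0].
  - rewrite (slope_at_zero b Hsmooth Hb0 s Hs). lra.
  - apply (slope_lt_one n F c b); auto. lra.
Qed.
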